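(* A $\mathsf V$-category $X$ is L-separated if and only if the diagonal $\Delta=\{(x,x)\mid x\in X\}$ is L-closed in the product $\mathsf V$-category $X\times X$ (i.e. equals its L-closure).
   Context: Let $\mathsf V=(\mathsf V,\otimes,k)$ be a commutative unital quantale (complete lattice with commutative associative $\otimes$, neutral element $k$, $u\otimes(-)$ preserving suprema). A $\mathsf V$-category $(X,a)$ is a set with $a:X\times X\to\mathsf V$, $k\le a(x,x)$, $a(x,y)\otimes a(y,z)\le a(x,z)$; a $\mathsf V$-functor $f:(X,a)\to(Y,b)$ satisfies $a(x,y)\le b(f(x),f(y))$. The product $X\times X$ has structure $((x,y),(x',y'))\mapsto a(x,x')\wedge a(y,y')$. For $\mathsf V$-functors $f,g:Z\to(Y,b)$, $f\cong g$ means $k\le b(f(z),g(z))$ and $k\le b(g(z),f(z))$ for all $z$ (for points likewise). $X$ is L-separated if $f\cong g$ implies $f=g$ for all $\mathsf V$-functors $f,g:Z\to X$. The L-closure of a subset $M$ of a $\mathsf V$-category $W$ is $\overline M=\{w\in W\mid$ for all $\mathsf V$-functors $g,h:W\to Z$ with $g|_M=h|_M$ one has $g(w)\cong h(w)\}$. *)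

Set Universe Polymorphism.

Record quantale := Quantale {
  qcar :> Type;
  qle : qcar -> qcar -> Prop;
  qle_refl : forall x, qle x x;
  qle_trans : forall x y z, qle x y -> qle y z -> qle x z;
  qle_antisym : forall x y, qle x y -> qle y x -> x = y;
  qsup : (qcar -> Prop) -> qcar;
  qsup_ub : forall (S : qcar -> Prop) x, S x -> qle x (qsup S);
  qsup_least : forall (S : qcar -> Prop) y,
      (forall x, S x -> qle x y) -> qle (qsup S) y;
  qten : qcar -> qcar -> qcar;
  qk : qcar;
  qten_assoc : forall x y z, qten x (qten y z) = qten (qten x y) z;
  qten_comm : forall x y, qten x y = qten y x;
  qten_k : forall x, qten qk x = x;
  qten_sup : forall u (S : qcar -> Prop),
      qten u (qsup S) = qsup (fun y => exists s, S s /\ y = qten u s)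
}.

Arguments qle {q}.
Arguments qsup {q}.
Arguments qten {q}.

Definition qmeet (V : quantale) (x y : V) : V :=
  qsup (fun z => qle z x /\ qle z y).

Definition isVCat (V : quantale) (X : Type) (a : X -> X -> V) : Prop :=
  (forall x, qle (qk V) (a x x)) /\
  (forall x y z, qle (qten (a x y) (a y z)) (a x z)).

Definition isVFunctor (V : quantale) (X Y : Type) (a : X -> X -> V)
  (b : Y -> Y -> V) (f : X -> Y) : Prop :=
  forall x y, qle (a x y) (b (f x) (f y)).

Definition pt_iso (V : quantale) (Y : Type) (b : Y -> Y -> V) (x y : Y) : Prop :=
  qle (qk V) (b x y) /\ qle (qk V) (b y x).

Definition fun_iso (V : quantale) (Z Y : Type) (b : Y -> Y -> V) (f g : Z -> Y) : Prop :=
  forall z, pt_iso V Y b (f z) (g z).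

Definition Lseparated (V : quantale) (X : Type) (a : X -> X -> V) : Prop :=
  forall (Z : Type) (c : Z -> Z -> V), isVCat V Z c ->
  forall f g : Z -> X, isVFunctor V Z X c a f -> isVFunctor V Z X c a g ->
  fun_iso V Z X a f g -> f = g.

Definition Lclosure (V : quantale) (W : Type) (b : W -> W -> V)
  (M : W -> Prop) (w : W) : Prop :=
  forall (Z : Type) (c : Z -> Z -> V), isVCat V Z c ->
  forall g h : W -> Z, isVFunctor V W Z b c g -> isVFunctor V W Z b c h ->
  (forall m, M m -> g m = h m) -> pt_iso V Z c (g w) (h w).

Definition prod_hom (V : quantale) (X : Type) (a : X -> X -> V)
  (p q : X * X) : V :=
  qmeet V (a (fst p) (fst q)) (a (snd p) (snd q)).

Definition diagonal (X : Type) (p : X * X) : Prop := fst p = snd p.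

(** The closure of the diagonal is exactly the set of pairs of isomorphic
    points: a pair [(x, y)] with [x ≅ y] is isomorphic in [X × X] to the
    diagonal point [(x, x)], and V-functors preserve isomorphism, so it lies
    in the closure; conversely the projections agree on the diagonal, so
    any point of the closure satisfies [x ≅ y]. On the other hand [X] is
    L-separated exactly when isomorphic points are equal (test with
    constant maps out of the one-point V-category). Both sides of the
    theorem thus say that [≅] is equality on [X]. *)

From Stdlib Require Import FunctionalExtensionality.

Section QuantaleOrder.

Variable V : quantale.

Lemma qten_mono_r (x u u' : V) : qle u u' -> qle (qten x u) (qten x u').
Proof.
  intros Huu'.
  set (S := fun s : V => s = u \/ s = u').
  assert (Hsup : qsup S = u').
  { apply qle_antisym.
    - apply qsup_least. intros s [-> | ->]; [exact Huu' | apply qle_refl].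
    - apply qsup_ub. now right. }
  rewrite <- Hsup, qten_sup. apply qsup_ub. exists u. split; [now left | reflexivity].
Qed.

Lemma qten_mono (x x' u u' : V) :
  qle x x' -> qle u u' -> qle (qten x u) (qten x' u').
Proof.
  intros Hxx' Huu'. apply (qle_trans V _ (qten x u')); [now apply qten_mono_r |].
  rewrite (qten_comm V x u'), (qten_comm V x' u'). now apply qten_mono_r.
Qed.

Lemma qk_le_ten (u v : V) : qle (qk V) u -> qle (qk V) v -> qle (qk V) (qten u v).
Proof.
  intros Hu Hv. rewrite <- (qten_k V (qk V)). now apply qten_mono.
Qed.

Lemma qmeet_le_l (x y : V) : qle (qmeet V x y) x.
Proof. apply qsup_least. now intros z [Hzx _]. Qed.

Lemma qmeet_le_r (x y : V) : qle (qmeet V x y) y.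
Proof. apply qsup_least. now intros z [_ Hzy]. Qed.

Lemma qle_meet (z x y : V) : qle z x -> qle z y -> qle z (qmeet V x y).
Proof. intros Hzx Hzy. apply qsup_ub. now split. Qed.

End QuantaleOrder.

Section PointIsomorphism.

Variables (V : quantale) (Y : Type) (b : Y -> Y -> V).

Lemma pt_iso_refl : isVCat V Y b -> forall y, pt_iso V Y b y y.
Proof. intros [Hrefl _] y. split; apply Hrefl. Qed.

Lemma pt_iso_sym (x y : Y) : pt_iso V Y b x y -> pt_iso V Y b y x.
Proof. now intros [Hxy Hyx]. Qed.

Lemma pt_iso_trans : isVCat V Y b ->
  forall x y z, pt_iso V Y b x y -> pt_iso V Y b y z -> pt_iso V Y b x z.
Proof.
  intros [_ Htrans] x y z [Hxy Hyx] [Hyz Hzy].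
  split; eapply qle_trans; [| apply (Htrans x y z) | | apply (Htrans z y x)];
    now apply qk_le_ten.
Qed.

Lemma vfunctor_pt_iso (W : Type) (c : W -> W -> V) (f : Y -> W) :
  isVFunctor V Y W b c f ->
  forall x y, pt_iso V Y b x y -> pt_iso V W c (f x) (f y).
Proof.
  intros Hf x y [Hxy Hyx].
  split; eapply qle_trans; [exact Hxy | apply Hf | exact Hyx | apply Hf].
Qed.

End PointIsomorphism.

Section Product.

Variables (V : quantale) (X : Type) (a : X -> X -> V).

Lemma fst_vfunctor : isVFunctor V (X * X) X (prod_hom V X a) a fst.
Proof. intros p q. apply qmeet_le_l. Qed.

Lemma snd_vfunctor : isVFunctor V (X * X) X (prod_hom V X a) a snd.
Proof. intros p q. apply qmeet_le_r. Qed.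

Lemma prod_pt_iso (x y x' y' : X) :
  pt_iso V X a x x' -> pt_iso V X a y y' ->
  pt_iso V (X * X) (prod_hom V X a) (x, y) (x', y').
Proof.
  intros [Hxx' Hx'x] [Hyy' Hy'y]. split; now apply qle_meet.
Qed.

End Product.

Lemma Lclosure_of_pt_iso (V : quantale) (W : Type) (b : W -> W -> V)
  (M : W -> Prop) (w m : W) :
  M m -> pt_iso V W b w m -> Lclosure V W b M w.
Proof.
  intros Hm Hwm Z c Hc g h Hg Hh Hgh.
  apply (pt_iso_trans V Z c Hc _ (g m)); [now apply (vfunctor_pt_iso V W b) |].
  rewrite (Hgh m Hm). apply pt_iso_sym. now apply (vfunctor_pt_iso V W b).
Qed.

Lemma Lclosure_diagonal (V : quantale) (X : Type) (a : X -> X -> V) :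
  isVCat V X a -> forall x y : X,
  Lclosure V (X * X) (prod_hom V X a) (diagonal X) (x, y) <-> pt_iso V X a x y.
Proof.
  intros HX x y. split.
  - intros Hcl. apply (Hcl X a HX fst snd (fst_vfunctor V X a) (snd_vfunctor V X a)).
    now intros m.
  - intros Hxy. apply (Lclosure_of_pt_iso _ _ _ _ _ (x, x)); [reflexivity |].
    apply prod_pt_iso; [now apply pt_iso_refl | now apply pt_iso_sym].
Qed.

Lemma isVCat_point (V : quantale) : isVCat V unit (fun _ _ => qk V).
Proof. split; intros; [| rewrite qten_k]; apply qle_refl. Qed.

Lemma Lseparated_iff_pt_iso_eq (V : quantale) (X : Type) (a : X -> X -> V) :
  isVCat V X a ->
  Lseparated V X a <-> (forall x y, pt_iso V X a x y -> x = y).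
Proof.
  intros [Hrefl _]. split.
  - intros Hsep x y Hxy.
    assert (Hconst : (fun _ : unit => x) = (fun _ => y)).
    { apply (Hsep unit _ (isVCat_point V)); [intros u v; apply Hrefl ..| now intros u]. }
    exact (f_equal (fun f => f tt) Hconst).
  - intros Hiso_eq Z c _ f g _ _ Hfg.
    apply functional_extensionality. intros z. now apply Hiso_eq.
Qed.

Theorem mainTheorem10 (V : quantale) (X : Type) (a : X -> X -> V)
  (HX : isVCat V X a) :
  Lseparated V X a <->
  (forall p : X * X,
     Lclosure V (X * X) (prod_hom V X a) (diagonal X) p <-> diagonal X p).
Proof.
  pose proof (Lseparated_iff_pt_iso_eq V X a HX) as Hsep.
  split.
  - intros HL [x y]. pose proof (Lclosure_diagonal V X a HX x y) as Hcl.
    split.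
    + intros Hxy. exact (proj1 Hsep HL x y (proj1 Hcl Hxy)).
    + unfold diagonal; simpl. intros <-. apply Hcl. now apply pt_iso_refl.
  - intros Hclosed. apply Hsep. intros x y Hxy.
    apply (Hclosed (x, y)). now apply Lclosure_diagonal.
Qed.
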